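(* Let $X$ be an AM-space such that the closed unit ball $\mathbf B(X)$ has an order extreme point. Then $X$ is lattice isometric to $C(K)$ for some compact Hausdorff space $K$.
   Context: An AM-space is a Banach lattice whose norm satisfies $\|x\vee y\|=\max(\|x\|,\|y\|)$ for all $x,y\ge0$. A point $a\in A$ is an order extreme point of $A$ if for all $x_0,x_1\in A$ and $t\in(0,1)$, $a\le(1-t)x_0+tx_1$ implies $x_0=a=x_1$. *)

From Stdlib Require Import Reals Lra List.
Open Scope R_scope.

Record BanachLattice := {
  bl_car :> Type;
  bl_zero : bl_car;
  bl_add : bl_car -> bl_car -> bl_car;
  bl_opp : bl_car -> bl_car;
  bl_scal : R -> bl_car -> bl_car;
  bl_le : bl_car -> bl_car -> Prop;
  bl_join : bl_car -> bl_car -> bl_car;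
  bl_norm : bl_car -> R;
  bl_addA : forall x y z, bl_add x (bl_add y z) = bl_add (bl_add x y) z;
  bl_addC : forall x y, bl_add x y = bl_add y x;
  bl_add0 : forall x, bl_add x bl_zero = x;
  bl_addN : forall x, bl_add x (bl_opp x) = bl_zero;
  bl_scalA : forall a b x, bl_scal a (bl_scal b x) = bl_scal (a * b) x;
  bl_scal1 : forall x, bl_scal 1 x = x;
  bl_scalDr : forall a x y, bl_scal a (bl_add x y) = bl_add (bl_scal a x) (bl_scal a y);
  bl_scalDl : forall a b x, bl_scal (a + b) x = bl_add (bl_scal a x) (bl_scal b x);
  bl_le_refl : forall x, bl_le x x;
  bl_le_anti : forall x y, bl_le x y -> bl_le y x -> x = y;
  bl_le_trans : forall x y z, bl_le x y -> bl_le y z -> bl_le x z;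
  bl_le_add : forall x y z, bl_le x y -> bl_le (bl_add x z) (bl_add y z);
  bl_le_scal : forall a x y, 0 <= a -> bl_le x y -> bl_le (bl_scal a x) (bl_scal a y);
  bl_join_l : forall x y, bl_le x (bl_join x y);
  bl_join_r : forall x y, bl_le y (bl_join x y);
  bl_join_least : forall x y z, bl_le x z -> bl_le y z -> bl_le (bl_join x y) z;
  bl_norm_eq0 : forall x, bl_norm x = 0 -> x = bl_zero;
  bl_norm_triangle : forall x y, bl_norm (bl_add x y) <= bl_norm x + bl_norm y;
  bl_norm_scal : forall a x, bl_norm (bl_scal a x) = Rabs a * bl_norm x;
  bl_norm_mono : forall x y,
    bl_le (bl_join x (bl_opp x)) (bl_join y (bl_opp y)) -> bl_norm x <= bl_norm y;
  bl_complete : forall u : nat -> bl_car,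
    (forall eps, 0 < eps -> exists N, forall m n, (N <= m)%nat -> (N <= n)%nat ->
        bl_norm (bl_add (u m) (bl_opp (u n))) < eps) ->
    exists l, forall eps, 0 < eps -> exists N, forall n, (N <= n)%nat ->
        bl_norm (bl_add (u n) (bl_opp l)) < eps
}.

Arguments bl_zero {_}.
Arguments bl_add {_}.
Arguments bl_opp {_}.
Arguments bl_scal {_}.
Arguments bl_le {_}.
Arguments bl_join {_}.
Arguments bl_norm {_}.

Definition is_AM_space (X : BanachLattice) : Prop :=
  forall x y : X, bl_le bl_zero x -> bl_le bl_zero y ->
    bl_norm (bl_join x y) = Rmax (bl_norm x) (bl_norm y).

Definition unit_ball (X : BanachLattice) (x : X) : Prop := bl_norm x <= 1.

Definition order_extreme_point (X : BanachLattice) (A : X -> Prop) (a : X) : Prop :=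
  A a /\
  forall x0 x1 t, A x0 -> A x1 -> 0 < t < 1 ->
    bl_le a (bl_add (bl_scal (1 - t) x0) (bl_scal t x1)) ->
    x0 = a /\ a = x1.

Record TopSpace := {
  ts_pt :> Type;
  ts_open : (ts_pt -> Prop) -> Prop;
  ts_open_full : ts_open (fun _ => True);
  ts_open_empty : ts_open (fun _ => False);
  ts_open_inter : forall U V, ts_open U -> ts_open V -> ts_open (fun x => U x /\ V x);
  ts_open_union : forall F : (ts_pt -> Prop) -> Prop,
    (forall U, F U -> ts_open U) -> ts_open (fun x => exists U, F U /\ U x)
}.
Arguments ts_open {_}.

Definition compact_space (K : TopSpace) : Prop :=
  forall (I : Type) (U : I -> K -> Prop),
    (forall i, ts_open (U i)) -> (forall x, exists i, U i x) ->
    exists l : list I, forall x, exists i, In i l /\ U i x.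

Definition hausdorff_space (K : TopSpace) : Prop :=
  forall x y : K, x <> y ->
    exists U V, ts_open U /\ ts_open V /\ U x /\ V y /\ (forall z, U z -> V z -> False).

Definition continuous_fun (K : TopSpace) (f : K -> R) : Prop :=
  forall x eps, 0 < eps ->
    exists U, ts_open U /\ U x /\ forall y, U y -> Rabs (f y - f x) < eps.

(** Sup norm on C(K) (with sup over the empty set taken to be 0). *)
Definition is_sup_norm (K : TopSpace) (f : K -> R) (r : R) : Prop :=
  0 <= r /\ (forall k, Rabs (f k) <= r) /\
  (forall c, 0 <= c -> (forall k, Rabs (f k) <= c) -> r <= c).

Definition lattice_isometry_onto_CK (X : BanachLattice) (K : TopSpace) (T : X -> K -> R) : Prop :=
  (forall x, continuous_fun K (T x)) /\
  (forall x y, (forall k, T x k = T y k) -> x = y) /\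
  (forall f, continuous_fun K f -> exists x, forall k, T x k = f k) /\
  (forall x y k, T (bl_add x y) k = T x k + T y k) /\
  (forall a x k, T (bl_scal a x) k = a * T x k) /\
  (forall x y k, T (bl_join x y) k = Rmax (T x k) (T y k)) /\
  (forall x, is_sup_norm K (T x) (bl_norm x)).

(** Let [a] be an order extreme point of the closed unit ball of an AM-space [X].
    1. [a >= 0], and the AM-property forces [|x| <= a] on the ball; hence [a] is a
       strong unit with [|x| <= ||x|| a], and conversely [|x| <= l a] bounds [||x||] by [l].
    2. By Zorn's lemma every ideal missing [a] extends to a maximal such ideal [M].
       [M] is prime and every [y] is a real multiple of [a] modulo [M] (the multiple is
       found as a cut point), so the residue map is a real lattice homomorphism with value
       [1] at [a]: every ideal missing [a] is annihilated by such a homomorphism.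
    3. The set [K] of these homomorphisms, with the weak topology generated by the sets
       [{f | 0 < f y}], is Hausdorff and compact; finite subcovers come from step 2
       applied to the ideal generated by the positive parts of the covering vectors.
    4. Step 2 applied to the ideal generated by [||x|| a - |x|] shows that [||x||] is the
       maximum of [|f x|] over [K]: evaluation is a lattice isometry of [X] into [C(K)].
    5. A lattice Stone-Weierstrass argument (finite meets and joins of two-point
       interpolants, using compactness) shows the image is dense, and completeness of
       [X] makes evaluation onto [C(K)]. *)

From Stdlib Require Import Reals Lra List.
From Stdlib Require Import Classical ClassicalEpsilon FunctionalExtensionality ProofIrrelevance
  PropExtensionality.
From mathcomp Require classical_sets.
Open Scope R_scope.

Notation "x <<= y" := (bl_le x y) (at level 70).
Notation "x +. y" := (bl_add x y) (at level 50, left associativity).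
Notation "-. x" := (bl_opp x) (at level 35, right associativity).
Notation "a *: x" := (bl_scal a x) (at level 40, no associativity).
Notation "x |_| y" := (bl_join x y) (at level 45, left associativity).
Notation "'0v'" := bl_zero.

Section VectorLattice.
Context {X : BanachLattice}.
Implicit Types (x y z u v w : X) (a b c : R).

Definition babs x := x |_| -. x.
Definition bpos x := x |_| 0v.
Definition bneg x := (-. x) |_| 0v.

Lemma add0l x : 0v +. x = x.
Proof. rewrite bl_addC; apply bl_add0. Qed.

Lemma addNl x : -. x +. x = 0v.
Proof. rewrite bl_addC; apply bl_addN. Qed.

Lemma add_sub_cancel x y : x +. y +. -. y = x.
Proof. rewrite <- bl_addA, bl_addN, bl_add0; reflexivity. Qed.

Lemma add_opp_cancel x y : x +. -. y +. y = x.
Proof. rewrite <- bl_addA, addNl, bl_add0; reflexivity. Qed.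

Lemma add_cancel_l x y z : z +. x = z +. y -> x = y.
Proof.
  intro H. rewrite <- (add_sub_cancel x z), <- (add_sub_cancel y z), !(bl_addC _ _ z), H.
  reflexivity.
Qed.

Lemma add4 x y z w : (x +. y) +. (z +. w) = (x +. z) +. (y +. w).
Proof. rewrite !bl_addA. f_equal. rewrite <- !bl_addA. f_equal. apply bl_addC. Qed.

Lemma scal0l x : 0 *: x = 0v.
Proof.
  apply (add_cancel_l _ _ (0 *: x)). rewrite bl_add0, <- bl_scalDl, Rplus_0_l; reflexivity.
Qed.

Lemma scal0r c : c *: (0v : X) = 0v.
Proof.
  apply (add_cancel_l _ _ (c *: 0v)). rewrite bl_add0, <- bl_scalDr, bl_add0; reflexivity.
Qed.

Lemma opp_unique x y : x +. y = 0v -> y = -. x.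
Proof. intro H. rewrite <- (add0l y), <- (addNl x), <- bl_addA, H, bl_add0; reflexivity. Qed.

Lemma opp_scal x : -. x = (-1) *: x.
Proof.
  symmetry; apply opp_unique. rewrite <- (bl_scal1 _ x) at 1. rewrite <- bl_scalDl.
  replace (1 + -1) with 0 by ring. apply scal0l.
Qed.

Lemma scal_opp c x : -. (c *: x) = (- c) *: x.
Proof. rewrite opp_scal, bl_scalA; f_equal; ring. Qed.

Lemma scal_oppr c x : c *: (-. x) = -. (c *: x).
Proof. rewrite opp_scal, bl_scalA, scal_opp; f_equal; ring. Qed.

Lemma opp_opp x : -. -. x = x.
Proof. rewrite !opp_scal, bl_scalA. replace (-1 * -1) with 1 by ring. apply bl_scal1. Qed.

Lemma opp_add x y : -. (x +. y) = -. x +. -. y.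
Proof. rewrite !opp_scal. apply bl_scalDr. Qed.

Lemma opp0 : -. (0v : X) = 0v.
Proof. rewrite opp_scal; apply scal0r. Qed.

Lemma scal_invK c x : c <> 0 -> / c *: (c *: x) = x.
Proof. intro Hc. rewrite bl_scalA, Rinv_l by exact Hc. apply bl_scal1. Qed.

Lemma scal_Kinv c x : c <> 0 -> c *: (/ c *: x) = x.
Proof. intro Hc. rewrite bl_scalA, Rinv_r by exact Hc. apply bl_scal1. Qed.

Lemma le_add_l x y z : x <<= y -> z +. x <<= z +. y.
Proof. intro H; rewrite (bl_addC _ z x), (bl_addC _ z y); apply bl_le_add, H. Qed.

Lemma le_add2 x y u v : x <<= y -> u <<= v -> x +. u <<= y +. v.
Proof.
  intros H1 H2; apply bl_le_trans with (y +. u); [apply bl_le_add, H1 | apply le_add_l, H2].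
Qed.

Lemma le_add_move x z w : x +. z <<= w -> x <<= w +. -. z.
Proof. intro H; rewrite <- (add_sub_cancel x z); apply bl_le_add, H. Qed.

Lemma le_add_move' x z w : x <<= w +. -. z -> x +. z <<= w.
Proof. intro H; rewrite <- (add_opp_cancel w z); apply bl_le_add, H. Qed.

Lemma le_opp x y : x <<= y -> -. y <<= -. x.
Proof.
  intro H. pose proof (bl_le_add _ x y (-. x +. -. y) H) as H'.
  rewrite bl_addA, bl_addN, add0l, (bl_addC _ (-. x)), bl_addA, bl_addN, add0l in H'.
  exact H'.
Qed.

Lemma le_sub_nonneg x y : x <<= y -> 0v <<= y +. -. x.
Proof. intro H; apply le_add_move; rewrite add0l; exact H. Qed.

Lemma le_of_sub_nonneg x y : 0v <<= y +. -. x -> x <<= y.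
Proof. intro H; rewrite <- (add0l x). apply le_add_move'. exact H. Qed.

Lemma add_nonneg x y : 0v <<= x -> 0v <<= y -> 0v <<= x +. y.
Proof. intros Hx Hy; rewrite <- (bl_add0 _ 0v); apply le_add2; assumption. Qed.

Lemma le_addr x y : 0v <<= y -> x <<= x +. y.
Proof. intro Hy; rewrite <- (bl_add0 _ x) at 1; apply le_add_l, Hy. Qed.

Lemma scal_nonneg c x : 0 <= c -> 0v <<= x -> 0v <<= c *: x.
Proof. intros Hc Hx; rewrite <- (scal0r c); apply bl_le_scal; assumption. Qed.

Lemma le_scal_r a b x : a <= b -> 0v <<= x -> a *: x <<= b *: x.
Proof.
  intros Hab Hx. apply le_of_sub_nonneg. rewrite scal_opp, <- bl_scalDl.
  apply scal_nonneg; [lra | exact Hx].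
Qed.

Lemma le_scal_inv c x y : 0 < c -> c *: x <<= c *: y -> x <<= y.
Proof.
  intros Hc H. rewrite <- (scal_invK c x), <- (scal_invK c y) by lra.
  apply bl_le_scal; [left; apply Rinv_0_lt_compat, Hc | exact H].
Qed.

Lemma join_comm x y : x |_| y = y |_| x.
Proof. apply bl_le_anti; apply bl_join_least; first [apply bl_join_l | apply bl_join_r]. Qed.

Lemma join_of_le x y : x <<= y -> x |_| y = y.
Proof.
  intro H; apply bl_le_anti; [apply bl_join_least; [exact H | apply bl_le_refl] | apply bl_join_r].
Qed.

Lemma join_mono x x' y y' : x <<= x' -> y <<= y' -> x |_| y <<= x' |_| y'.
Proof.
  intros H1 H2; apply bl_join_least.
  - apply bl_le_trans with x'; [exact H1 | apply bl_join_l].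
  - apply bl_le_trans with y'; [exact H2 | apply bl_join_r].
Qed.

Lemma join_add x y z : (x |_| y) +. z = (x +. z) |_| (y +. z).
Proof.
  apply bl_le_anti.
  - apply le_add_move'. apply bl_join_least; apply le_add_move; [apply bl_join_l | apply bl_join_r].
  - apply bl_join_least; apply bl_le_add; [apply bl_join_l | apply bl_join_r].
Qed.

Lemma join_scal c x y : 0 <= c -> c *: (x |_| y) = (c *: x) |_| (c *: y).
Proof.
  intro Hc. destruct (Req_dec c 0) as [-> | Hc0].
  - rewrite !scal0l; symmetry; apply join_of_le, bl_le_refl.
  - apply bl_le_anti.
    + apply (le_scal_inv (/ c)); [apply Rinv_0_lt_compat; lra |].
      rewrite scal_invK by exact Hc0.
      assert (Hinv : 0 <= / c) by (left; apply Rinv_0_lt_compat; lra).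
      apply bl_join_least; rewrite <- (scal_invK c) at 1 by exact Hc0;
        apply bl_le_scal; [exact Hinv | apply bl_join_l | exact Hinv | apply bl_join_r].
    + apply bl_join_least; apply bl_le_scal; auto; [apply bl_join_l | apply bl_join_r].
Qed.

Lemma abs_ge x : x <<= babs x.
Proof. apply bl_join_l. Qed.

Lemma abs_ge_opp x : -. x <<= babs x.
Proof. apply bl_join_r. Qed.

Lemma abs_nonneg x : 0v <<= babs x.
Proof.
  assert (H : 0v <<= babs x +. babs x).
  { rewrite <- (bl_addN _ x). apply le_add2; [apply abs_ge | apply abs_ge_opp]. }
  apply (le_scal_inv 2); [lra |]. rewrite scal0r.
  replace 2 with (1 + 1) by ring. rewrite bl_scalDl, bl_scal1. exact H.
Qed.

Lemma abs_le x u : x <<= u -> -. x <<= u -> babs x <<= u.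
Proof. intros; apply bl_join_least; assumption. Qed.

Lemma abs_of_nonneg u : 0v <<= u -> babs u = u.
Proof.
  intro H. unfold babs. rewrite join_comm. apply join_of_le.
  apply bl_le_trans with 0v; [| exact H]. rewrite <- opp0. apply le_opp, H.
Qed.

Lemma abs_abs x : babs (babs x) = babs x.
Proof. apply abs_of_nonneg, abs_nonneg. Qed.

Lemma abs_opp x : babs (-. x) = babs x.
Proof. unfold babs; rewrite opp_opp; apply join_comm. Qed.

Lemma abs0 : babs (0v : X) = 0v.
Proof. apply abs_of_nonneg, bl_le_refl. Qed.

Lemma abs_add x y : babs (x +. y) <<= babs x +. babs y.
Proof.
  apply abs_le.
  - apply le_add2; apply abs_ge.
  - rewrite opp_add; apply le_add2; apply abs_ge_opp.
Qed.

Lemma abs_scal c x : babs (c *: x) = Rabs c *: babs x.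
Proof.
  assert (Hpos : forall c y, 0 <= c -> babs (c *: y) = c *: babs y).
  { intros d y Hd. unfold babs. rewrite join_scal, scal_oppr by exact Hd. reflexivity. }
  destruct (Rle_dec 0 c) as [Hc | Hc].
  - rewrite Rabs_right by lra. apply Hpos, Hc.
  - rewrite Rabs_left by lra. rewrite <- abs_opp, scal_opp, <- Hpos by lra. reflexivity.
Qed.

Lemma abs_le0 x : babs x <<= 0v -> x = 0v.
Proof.
  intro H. apply bl_le_anti.
  - apply bl_le_trans with (babs x); [apply abs_ge | exact H].
  - rewrite <- (opp_opp x), <- opp0. apply le_opp.
    apply bl_le_trans with (babs x); [apply abs_ge_opp | exact H].
Qed.

Lemma pos_ge x : x <<= bpos x.
Proof. apply bl_join_l. Qed.

Lemma pos_nonneg x : 0v <<= bpos x.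
Proof. apply bl_join_r. Qed.

Lemma neg_ge x : -. x <<= bneg x.
Proof. apply bl_join_l. Qed.

Lemma neg_nonneg x : 0v <<= bneg x.
Proof. apply bl_join_r. Qed.

Lemma pos_neg_disjoint x p : p <<= bpos x -> p <<= bneg x -> p <<= 0v.
Proof.
  intros H1 H2.
  assert (Hneg : bneg x = bpos x +. -. x).
  { unfold bneg, bpos. rewrite join_add, bl_addN, add0l. apply join_comm. }
  rewrite Hneg in H2.
  assert (H3 : bpos x <<= bpos x +. -. p).
  { apply bl_join_least.
    - apply le_add_move. rewrite bl_addC. apply le_add_move'. exact H2.
    - apply le_sub_nonneg, H1. }
  apply (le_add_l _ _ (-. bpos x)) in H3. rewrite addNl, bl_addA, addNl, add0l in H3.
  rewrite <- (opp_opp p), <- opp0. apply le_opp, H3.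
Qed.

Lemma le_of_pos_neg_bounds x m w c :
  0 <= c -> x <<= m +. c *: bpos w -> x <<= m +. c *: bneg w -> x <<= m.
Proof.
  intros Hc H1 H2.
  assert (Hq : forall q, 0v <<= q -> x <<= m +. c *: q -> / (c + 1) *: (x +. -. m) <<= q).
  { intros q Hq H. apply (le_scal_inv (c + 1)); [lra |]. rewrite scal_Kinv by lra.
    apply bl_le_trans with (c *: q); [| apply le_scal_r; [lra | exact Hq]].
    apply (bl_le_add _ _ _ (-. m)) in H. rewrite (bl_addC _ m), add_sub_cancel in H. exact H. }
  pose proof (pos_neg_disjoint w _ (Hq _ (pos_nonneg w) H1) (Hq _ (neg_nonneg w) H2)) as H.
  rewrite <- (scal0r (/ (c + 1))) in H. apply le_scal_inv in H; [| apply Rinv_0_lt_compat; lra].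
  apply (bl_le_add _ _ _ m) in H. rewrite add_opp_cancel, add0l in H. exact H.
Qed.

Lemma abs_le_shifted_parts w e : babs w <<= e +. (bpos (w +. -. e) +. bneg (w +. e)).
Proof.
  apply abs_le.
  - apply bl_le_trans with (e +. bpos (w +. -. e)); [| apply le_add_l, le_addr, neg_nonneg].
    rewrite bl_addC, <- (add_opp_cancel w e) at 1. apply bl_le_add, pos_ge.
  - rewrite (bl_addC _ (bpos _)), bl_addA. apply bl_le_trans with (e +. bneg (w +. e));
      [| apply le_addr, pos_nonneg].
    rewrite bl_addC. rewrite <- (add_opp_cancel (-. w) e) at 1. rewrite <- opp_add.
    apply bl_le_add, neg_ge.
Qed.

Lemma norm0 : bl_norm (0v : X) = 0.
Proof. rewrite <- (scal0l (0v : X)), bl_norm_scal, Rabs_R0; ring. Qed.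

Lemma norm_opp x : bl_norm (-. x) = bl_norm x.
Proof. rewrite opp_scal, bl_norm_scal, Rabs_left by lra; ring. Qed.

Lemma norm_nonneg x : 0 <= bl_norm x.
Proof.
  pose proof (bl_norm_triangle _ x (-. x)) as H. rewrite bl_addN, norm0, norm_opp in H. lra.
Qed.

Lemma norm_abs x : bl_norm (babs x) = bl_norm x.
Proof.
  apply Rle_antisym; apply bl_norm_mono; fold (babs (babs x)) (babs x); rewrite abs_abs;
    apply bl_le_refl.
Qed.

Lemma norm_sub_sym x y : bl_norm (x +. -. y) = bl_norm (y +. -. x).
Proof. rewrite <- norm_opp, opp_add, opp_opp, bl_addC; reflexivity. Qed.

End VectorLattice.

Section ExtremePoint.
Context {X : BanachLattice}.
Variable a : X.
Hypothesis HAM : is_AM_space X.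
Hypothesis Hoe : order_extreme_point X (unit_ball X) a.

(** Order extremality applied to the trivial convex combination [x = x/2 + x/2]:
    any [x] of the ball lying above [a] equals [a]. *)
Lemma extreme_below x : bl_norm x <= 1 -> a <<= x -> x = a.
Proof.
  intros Hx Hax. destruct Hoe as [_ Hext].
  destruct (Hext x x (1/2) Hx Hx ltac:(lra)) as [H _]; [| exact H].
  rewrite <- bl_scalDl. replace (1 - 1/2 + 1/2) with 1 by field. rewrite bl_scal1. exact Hax.
Qed.

(** [|a|] lies in the ball above [a], hence [a = |a| >= 0]. *)
Lemma extreme_nonneg : 0v <<= a.
Proof.
  destruct Hoe as [Ha _]. unfold unit_ball in Ha.
  rewrite <- (extreme_below (babs a));
    [apply abs_nonneg | rewrite norm_abs; exact Ha | apply abs_ge].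
Qed.

(** In an AM-space, [a |_| |x|] stays in the ball, so it equals [a]:
    the extreme point dominates the modulus of every element of the ball. *)
Lemma ball_below_extreme x : bl_norm x <= 1 -> babs x <<= a.
Proof.
  intro Hx. destruct Hoe as [Ha _]. unfold unit_ball in Ha.
  rewrite <- (extreme_below (a |_| babs x)); [apply bl_join_r | | apply bl_join_l].
  rewrite HAM by (apply extreme_nonneg || apply abs_nonneg).
  rewrite norm_abs. apply Rmax_lub; assumption.
Qed.

(** By scaling: [a] is a strong unit and [|x| <= ||x|| a]. *)
Lemma abs_le_norm_extreme x : babs x <<= bl_norm x *: a.
Proof.
  pose proof (norm_nonneg x) as Hn. destruct (Req_dec (bl_norm x) 0) as [H0 | H0].
  - rewrite H0, (bl_norm_eq0 _ x H0), scal0l, abs0. apply bl_le_refl.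
  - apply (le_scal_inv (/ bl_norm x)); [apply Rinv_0_lt_compat; lra |].
    rewrite scal_invK by exact H0.
    rewrite <- (Rabs_right (/ bl_norm x)) by (left; apply Rinv_0_lt_compat; lra).
    rewrite <- abs_scal. apply ball_below_extreme.
    rewrite bl_norm_scal, Rabs_right by (left; apply Rinv_0_lt_compat; lra).
    right; field; exact H0.
Qed.

(** Conversely the norm is bounded by any order bound in terms of [a]
    (a negative bound forces [x = 0]). *)
Lemma norm_le_of_abs_le x l : babs x <<= l *: a -> bl_norm x <= Rmax l 0.
Proof.
  intro H. destruct (Rle_dec 0 l) as [Hl | Hl].
  - rewrite Rmax_left by exact Hl. destruct Hoe as [Ha _]. unfold unit_ball in Ha.
    assert (Hm : bl_norm x <= bl_norm (l *: a)).
    { apply bl_norm_mono. fold (babs x) (babs (l *: a)).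
      rewrite (abs_of_nonneg (l *: a)) by (apply scal_nonneg; [exact Hl | apply extreme_nonneg]).
      exact H. }
    rewrite bl_norm_scal, Rabs_right in Hm by lra. pose proof (norm_nonneg a). nra.
  - rewrite Rmax_right by lra.
    assert (Hx : x = 0v).
    { apply abs_le0. apply bl_le_trans with (l *: a); [exact H |].
      rewrite <- (scal0l a). apply le_scal_r; [lra | apply extreme_nonneg]. }
    rewrite Hx, norm0. lra.
Qed.

End ExtremePoint.

Definition chain {T : Type} (F : (T -> Prop) -> Prop) :=
  forall A B, F A -> F B -> (forall t, A t -> B t) \/ (forall t, B t -> A t).

Lemma zorn_sets (T : Type) (P : (T -> Prop) -> Prop) :
  (forall F, (forall A, F A -> P A) -> chain F -> P (fun t => exists A, F A /\ A t)) ->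
  exists A, P A /\ forall B, P B -> (forall t, A t -> B t) -> forall t, B t -> A t.
Proof.
  intro H. destruct (@classical_sets.Zorn_bigcup T P) as [A [HA Hmax]].
  - intros F HF Htot.
    replace (classical_sets.bigcup F (fun X => X)) with (fun t => exists A, F A /\ A t).
    + apply H; [exact HF | exact Htot].
    + apply functional_extensionality; intro t; apply propositional_extensionality.
      unfold classical_sets.bigcup, classical_sets.mkset; split.
      * intros [B [H1 H2]]; exists B; assumption.
      * intros [B H1 H2]; exists B; split; assumption.
  - exists A; split; [exact HA |]. intros B HB HAB t Bt.
    apply NNPP; intro Hn. apply (Hmax B); [| exact HB].
    split; [exact HAB |]. intro HBA. apply Hn, HBA, Bt.
Qed.

Section Ideals.
Context {X : BanachLattice}.
Implicit Types (x y z m u v : X) (J M N U : X -> Prop).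

Definition is_ideal J :=
  J 0v /\ (forall x y, J x -> J y -> J (x +. y)) /\ (forall c x, J x -> J (c *: x)) /\
  (forall x y, J x -> babs y <<= babs x -> J y).

Lemma ideal0 J : is_ideal J -> J 0v.
Proof. intros [H _]; exact H. Qed.

Lemma ideal_add J x y : is_ideal J -> J x -> J y -> J (x +. y).
Proof. intros [_ [H _]]; apply H. Qed.

Lemma ideal_scal J c x : is_ideal J -> J x -> J (c *: x).
Proof. intros [_ [_ [H _]]]; apply H. Qed.

Lemma ideal_solid J x y : is_ideal J -> J x -> babs y <<= babs x -> J y.
Proof. intros [_ [_ [_ H]]]; apply H. Qed.

Lemma ideal_sub J x y : is_ideal J -> J x -> J y -> J (x +. -. y).
Proof. intros HJ Hx Hy. apply ideal_add; auto. rewrite opp_scal; apply ideal_scal; auto. Qed.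

Lemma ideal_below J m z : is_ideal J -> J m -> 0v <<= z -> z <<= m -> J z.
Proof.
  intros HJ Hm Hz Hzm. apply (ideal_solid J m); [exact HJ | exact Hm |].
  rewrite (abs_of_nonneg z Hz). apply bl_le_trans with m; [exact Hzm | apply abs_ge].
Qed.

Lemma ideal_ext J N : is_ideal J -> (forall x, J x <-> N x) -> is_ideal N.
Proof.
  intros HJ E. repeat split.
  - apply E, ideal0, HJ.
  - intros x y Hx Hy; apply E, ideal_add; [exact HJ | apply E, Hx | apply E, Hy].
  - intros c x Hx; apply E, ideal_scal; [exact HJ | apply E, Hx].
  - intros x y Hx Hy; apply E, (ideal_solid J x); [exact HJ | apply E, Hx | exact Hy].
Qed.

Lemma ideal_join_le J m1 m2 q : is_ideal J -> J m1 -> J m2 -> q <<= m2 -> J (m1 |_| q).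
Proof.
  intros HJ H1 H2 Hq.
  replace (m1 |_| q) with ((0v |_| (q +. -. m1)) +. m1)
    by (rewrite join_add, add0l, add_opp_cancel; reflexivity).
  apply ideal_add; [exact HJ | | exact H1].
  apply (ideal_below J (babs (m2 +. -. m1))); [exact HJ | | apply bl_join_l |].
  - apply (ideal_solid J (m2 +. -. m1)); [exact HJ | apply ideal_sub; assumption |].
    rewrite abs_abs; apply bl_le_refl.
  - apply bl_join_least; [apply abs_nonneg |].
    apply bl_le_trans with (m2 +. -. m1); [apply bl_le_add, Hq | apply abs_ge].
Qed.

(** The elements dominated by a positive multiple of some element of [U]; when [U] is a
    set of positive elements containing [0] and closed under addition, this is the ideal
    generated by [U]. *)
Definition dominated U z := exists u c, U u /\ 0 <= c /\ babs z <<= c *: u.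

Lemma dominated_ideal U :
  U 0v -> (forall u, U u -> 0v <<= u) -> (forall u v, U u -> U v -> U (u +. v)) ->
  is_ideal (dominated U).
Proof.
  intros U0 Upos Uadd. repeat split.
  - exists 0v, 0. rewrite abs0, scal0l. split; [exact U0 | split; [lra | apply bl_le_refl]].
  - intros x y [u [c [Hu [Hc Hx]]]] [v [d [Hv [Hd Hy]]]].
    exists (u +. v), (c + d). split; [apply Uadd; assumption | split; [lra |]].
    apply bl_le_trans with (babs x +. babs y); [apply abs_add |].
    rewrite bl_scalDl, !bl_scalDr. apply le_add2.
    + apply bl_le_trans with (c *: u); [exact Hx | apply le_addr, scal_nonneg; auto].
    + apply bl_le_trans with (d *: v); [exact Hy |].
      rewrite bl_addC. apply le_addr, scal_nonneg; auto.
  - intros c x [u [d [Hu [Hd H]]]]. exists u, (Rabs c * d).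
    split; [exact Hu | split; [apply Rmult_le_pos; [apply Rabs_pos | exact Hd] |]].
    rewrite abs_scal, <- bl_scalA. apply bl_le_scal; [apply Rabs_pos | exact H].
  - intros x y [u [c [Hu [Hc H]]]] Hy. exists u, c.
    split; [exact Hu | split; [exact Hc | apply bl_le_trans with (babs x); assumption]].
Qed.

(** The union of a chain of ideals all containing [J] is an ideal; writing the members
    as [A \/ J] makes the empty chain (whose union is [J]) harmless. *)
Lemma chain_union_ideal J (F : (X -> Prop) -> Prop) :
  is_ideal J -> (forall A, F A -> is_ideal (fun t => A t \/ J t)) -> chain F ->
  is_ideal (fun t => (exists A, F A /\ A t) \/ J t).
Proof.
  intros HJ HF Hch. set (V := fun t => (exists A, F A /\ A t) \/ J t).
  assert (Hmember : forall A, F A -> forall t, A t \/ J t -> V t).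
  { intros A FA t [At | Jt]; [left; exists A; split; assumption | right; exact Jt]. }
  assert (Hcommon : forall x y, V x -> V y ->
            exists G, is_ideal G /\ (forall t, G t -> V t) /\ G x /\ G y).
  { assert (Hwitness : forall A, F A -> forall x y, A x \/ J x -> A y \/ J y ->
              exists G, is_ideal G /\ (forall t, G t -> V t) /\ G x /\ G y).
    { intros A FA x y Hx Hy. exists (fun t => A t \/ J t).
      split; [apply HF, FA | split; [apply Hmember, FA | split; assumption]]. }
    intros x y Hx Hy.
    destruct Hx as [[A [FA Ax]] | Jx]; destruct Hy as [[B [FB By]] | Jy].
    - destruct (Hch A B FA FB) as [HAB | HBA].
      + apply (Hwitness B FB); left; [apply HAB, Ax | exact By].
      + apply (Hwitness A FA); left; [exact Ax | apply HBA, By].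
    - apply (Hwitness A FA); [left; exact Ax | right; exact Jy].
    - apply (Hwitness B FB); [right; exact Jx | left; exact By].
    - exists J. split; [exact HJ | split; [intros t Jt; right; exact Jt | split; assumption]]. }
  repeat split.
  - right; apply ideal0, HJ.
  - intros x y Hx Hy. destruct (Hcommon x y Hx Hy) as [G [HG [GV [Gx Gy]]]].
    apply GV, ideal_add; assumption.
  - intros c x Hx. destruct (Hcommon x x Hx Hx) as [G [HG [GV [Gx _]]]].
    apply GV, ideal_scal; assumption.
  - intros x y Hx Hy. destruct (Hcommon x x Hx Hx) as [G [HG [GV [Gx _]]]].
    apply GV, (ideal_solid G x); assumption.
Qed.

Definition max_ideal (a : X) M := is_ideal M /\ ~ M a /\
  (forall N, is_ideal N -> ~ N a -> (forall x, M x -> N x) -> forall x, N x -> M x).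

Lemma exists_max_ideal (a : X) J :
  is_ideal J -> ~ J a -> exists M, max_ideal a M /\ forall x, J x -> M x.
Proof.
  intros HJ HJa.
  destruct (zorn_sets X (fun A => is_ideal (fun t => A t \/ J t) /\ ~ (A a \/ J a)))
    as [A [[HA HAa] Hmax]].
  - intros F HF Hch. split.
    + apply chain_union_ideal; [exact HJ | intros A FA; apply HF, FA | exact Hch].
    + intros [[A [FA Aa]] | Ja]; [apply (proj2 (HF A FA)); left; exact Aa | exact (HJa Ja)].
  - exists (fun t => A t \/ J t).
    split; [| intros x Jx; right; exact Jx]. split; [exact HA | split; [exact HAa |]].
    intros N HN HNa HAN x Nx. left.
    assert (HJN : forall t, J t -> N t) by (intros t Jt; apply HAN; right; exact Jt).
    apply (Hmax N); [split | intros t At; apply HAN; left; exact At | exact Nx].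
    + apply (ideal_ext N); [exact HN |]. intro t; split; [intro; left; assumption |].
      intros [H | H]; [exact H | apply HJN, H].
    + intros [H | H]; [exact (HNa H) | exact (HNa (HJN _ H))].
Qed.

End Ideals.

Lemma cut_point (S : R -> Prop) mu L :
  (forall l l', S l -> l <= l' -> S l') -> S mu -> ~ S L ->
  exists l0, forall d, 0 < d -> S (l0 + d) /\ ~ S (l0 - d).
Proof.
  intros Hup Smu SL.
  assert (Hlow : forall l, S l -> L < l).
  { intros l Sl. destruct (Rlt_dec L l) as [h | h]; [exact h |].
    exfalso; apply SL, (Hup l); [exact Sl | lra]. }
  destruct (completeness (fun r => S (- r))) as [m [Hub Hlub]].
  - exists (- L). intros r Sr. apply Hlow in Sr. lra.
  - exists (- mu). rewrite Ropp_involutive. exact Smu.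
  - exists (- m). intros d Hd. split.
    + apply NNPP; intro Hn. assert (m <= m - d); [| lra].
      apply Hlub. intros r Sr. destruct (Rle_dec r (m - d)) as [h | h]; [exact h |].
      exfalso; apply Hn, (Hup (- r)); [exact Sr | lra].
    + intro Hs. assert (H : m + d <= m); [| lra].
      apply Hub. replace (- (m + d)) with (- m - d) by ring. exact Hs.
Qed.

Section Homomorphisms.
Context {X : BanachLattice}.
Variable a : X.
Implicit Types (x y z m w : X) (f : X -> R).

(** Real lattice homomorphisms normalised at [a]: these are the points of the
    representing space. *)
Definition is_hom f :=
  (forall x y, f (x +. y) = f x + f y) /\ (forall c x, f (c *: x) = c * f x) /\
  (forall x y, f (x |_| y) = Rmax (f x) (f y)) /\ f a = 1.

Section HomFacts.
Variable f : X -> R.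
Hypothesis Hf : is_hom f.

Lemma hom_add x y : f (x +. y) = f x + f y.
Proof. apply Hf. Qed.

Lemma hom_scal c x : f (c *: x) = c * f x.
Proof. apply Hf. Qed.

Lemma hom_join x y : f (x |_| y) = Rmax (f x) (f y).
Proof. apply Hf. Qed.

Lemma hom_unit c : f (c *: a) = c.
Proof. destruct Hf as [_ [_ [_ Ha]]]. rewrite hom_scal, Ha; ring. Qed.

Lemma hom0 : f 0v = 0.
Proof. rewrite <- (scal0l 0v), hom_scal; ring. Qed.

Lemma hom_opp x : f (-. x) = - f x.
Proof. rewrite opp_scal, hom_scal; ring. Qed.

Lemma hom_sub x y : f (x +. -. y) = f x - f y.
Proof. rewrite hom_add, hom_opp; ring. Qed.

Lemma hom_abs x : f (babs x) = Rabs (f x).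
Proof.
  unfold babs. rewrite hom_join, hom_opp.
  unfold Rmax, Rabs; destruct (Rle_dec (f x) (- f x)); destruct (Rcase_abs (f x)); lra.
Qed.

Lemma hom_pos x : f (bpos x) = Rmax (f x) 0.
Proof. unfold bpos. rewrite hom_join, hom0. reflexivity. Qed.

Lemma hom_mono x y : x <<= y -> f x <= f y.
Proof. intro H. rewrite <- (join_of_le x y H), hom_join. apply Rmax_l. Qed.

End HomFacts.

Lemma hom_finite_join (x0 : X) (xs : list X) : exists z, forall f, is_hom f ->
  (forall x, In x (x0 :: xs) -> f x <= f z) /\ exists x, In x (x0 :: xs) /\ f z = f x.
Proof.
  induction xs as [| x1 xs [z Hz]].
  - exists x0. intros f _.
    split; [intros x [<- | []]; lra | exists x0; split; [left |]; reflexivity].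
  - exists (x1 |_| z). intros f Hf. rewrite (hom_join f Hf).
    destruct (Hz f Hf) as [Hle [x [Hx Ex]]].
    split.
    + intros x' [<- | [<- | Hx']].
      * eapply Rle_trans; [apply Hle; left; reflexivity | apply Rmax_r].
      * apply Rmax_l.
      * eapply Rle_trans; [apply Hle; right; exact Hx' | apply Rmax_r].
    + destruct (Rle_dec (f x1) (f z)) as [h | h].
      * rewrite Rmax_right by exact h. exists x.
        split; [destruct Hx as [<- | Hx]; simpl; auto | exact Ex].
      * rewrite Rmax_left by lra. exists x1. split; [simpl; auto | reflexivity].
Qed.

(** Dually, via [x |-> -x], a finite meet is evaluated as the minimum. *)
Lemma hom_finite_meet (x0 : X) (xs : list X) : exists z, forall f, is_hom f ->
  (forall x, In x (x0 :: xs) -> f z <= f x) /\ exists x, In x (x0 :: xs) /\ f z = f x.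
Proof.
  destruct (hom_finite_join (-. x0) (map bl_opp xs)) as [z Hz].
  exists (-. z). intros f Hf. destruct (Hz f Hf) as [Hle [x' [Hx' Ex']]].
  rewrite (hom_opp f Hf). split.
  - intros x Hx. assert (H : f (-. x) <= f z).
    { apply Hle. destruct Hx as [<- | Hx]; [left; reflexivity | right; apply in_map, Hx]. }
    rewrite (hom_opp f Hf) in H. lra.
  - assert (Hx : In (-. x') (x0 :: xs)).
    { destruct Hx' as [<- | Hx']; [left; symmetry; apply opp_opp |].
      apply in_map_iff in Hx'. destruct Hx' as [x [<- Hx]]. right; rewrite opp_opp; exact Hx. }
    exists (-. x'). split; [exact Hx | rewrite Ex', (hom_opp f Hf); reflexivity].
Qed.

Hypothesis a_nonneg : 0v <<= a.
Hypothesis strong_unit : forall y, exists c, babs y <<= c *: a.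

Section MaximalIdeal.
Variable M : X -> Prop.
Hypothesis HM : max_ideal a M.

Let HMi : is_ideal M := proj1 HM.
Let HMa : ~ M a := proj1 (proj2 HM).

(** By maximality, the ideal generated by [M] and any [u] outside [M] contains [a]. *)
Lemma maximal_generates u :
  ~ M u -> exists m c, M m /\ 0v <<= m /\ 0 <= c /\ a <<= m +. c *: babs u.
Proof.
  intro Hu. pose proof HM as [_ [_ Hmax]].
  set (U := fun v => exists m c, M m /\ 0v <<= m /\ 0 <= c /\ v = m +. c *: babs u).
  assert (HU : is_ideal (dominated U)).
  { apply dominated_ideal.
    - exists 0v, 0. rewrite scal0l, bl_add0.
      split; [apply ideal0, HMi | split; [apply bl_le_refl | split; [lra | reflexivity]]].
    - intros v [m [c [_ [Hm [Hc ->]]]]].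
      apply add_nonneg; [exact Hm | apply scal_nonneg; [exact Hc | apply abs_nonneg]].
    - intros v w [m1 [c1 [Hm1 [Hm1' [Hc1 ->]]]]] [m2 [c2 [Hm2 [Hm2' [Hc2 ->]]]]].
      exists (m1 +. m2), (c1 + c2). split; [apply ideal_add; assumption |].
      split; [apply add_nonneg; assumption | split; [lra |]].
      rewrite bl_scalDl. apply add4. }
  destruct (classic (dominated U a)) as [[v [d [[m [c [Hm [Hm0 [Hc ->]]]]] [Hd Ha]]]] | HUa].
  - exists (d *: m), (d * c).
    split; [apply ideal_scal; assumption | split; [apply scal_nonneg; assumption |]].
    split; [apply Rmult_le_pos; assumption |].
    rewrite <- bl_scalA, <- bl_scalDr, <- (abs_of_nonneg a a_nonneg). exact Ha.
  - exfalso. apply Hu, (Hmax (dominated U) HU HUa).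
    + intros x Mx. exists (babs x +. 0 *: babs u), 1.
      split; [exists (babs x), 0 |
              rewrite scal0l, bl_add0, bl_scal1; split; [lra | apply bl_le_refl]].
      split; [apply (ideal_solid M x); [exact HMi | exact Mx |] |].
      { rewrite abs_abs; apply bl_le_refl. }
      split; [apply abs_nonneg | split; [lra | reflexivity]].
    + exists (0v +. 1 *: babs u), 1.
      split; [exists 0v, 1 | rewrite add0l, !bl_scal1; split; [lra | apply bl_le_refl]].
      split; [apply ideal0, HMi | split; [apply bl_le_refl | split; [lra | reflexivity]]].
Qed.

Lemma maximal_prime w : M (bpos w) \/ M (bneg w).
Proof.
  apply NNPP; intro Hn.
  destruct (maximal_generates (bpos w)) as [m1 [c1 [Hm1 [Hm1p [Hc1 G1]]]]]; [tauto |].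
  destruct (maximal_generates (bneg w)) as [m2 [c2 [Hm2 [Hm2p [Hc2 G2]]]]]; [tauto |].
  rewrite abs_of_nonneg in G1 by apply pos_nonneg.
  rewrite abs_of_nonneg in G2 by apply neg_nonneg.
  apply HMa, (ideal_below M (m1 +. m2));
    [exact HMi | apply ideal_add; assumption | exact a_nonneg |].
  apply (le_of_pos_neg_bounds _ _ w (c1 + c2)); [lra | |].
  - apply bl_le_trans with (m1 +. c1 *: bpos w); [exact G1 |]. apply le_add2.
    + apply le_addr, Hm2p.
    + apply le_scal_r; [lra | apply pos_nonneg].
  - apply bl_le_trans with (m2 +. c2 *: bneg w); [exact G2 |]. apply le_add2.
    + rewrite bl_addC. apply le_addr, Hm1p.
    + apply le_scal_r; [lra | apply neg_nonneg].
Qed.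

Lemma maximal_approx w :
  (forall d, 0 < d -> exists n, M n /\ babs w <<= d *: a +. n) -> M w.
Proof.
  intro Happrox. apply NNPP; intro Hw.
  destruct (maximal_generates w Hw) as [m [c [Hm [_ [Hc Ha]]]]].
  set (d := / (c + 1)).
  assert (Hd : 0 < d) by (apply Rinv_0_lt_compat; lra).
  assert (Hcd : c * d < 1).
  { apply Rmult_lt_reg_r with (c + 1); [lra |].
    unfold d. rewrite Rmult_assoc, Rinv_l by lra. lra. }
  destruct (Happrox d Hd) as [n [Hn Hwn]].
  assert (H1 : a <<= (c * d) *: a +. (m +. c *: n)).
  { apply bl_le_trans with (m +. c *: babs w); [exact Ha |].
    apply bl_le_trans with (m +. c *: (d *: a +. n)); [apply le_add_l, bl_le_scal; assumption |].
    rewrite bl_scalDr, bl_scalA, bl_addA, (bl_addC _ m), <- bl_addA. apply bl_le_refl. }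
  apply (bl_le_add _ _ _ (-. ((c * d) *: a))) in H1.
  rewrite (bl_addC _ ((c * d) *: a)), add_sub_cancel, scal_opp in H1.
  rewrite <- (bl_scal1 _ a) in H1 at 1. rewrite <- bl_scalDl in H1.
  apply HMa, (ideal_below M (/ (1 + - (c * d)) *: (m +. c *: n))); [exact HMi | | exact a_nonneg |].
  - apply ideal_scal, ideal_add, ideal_scal; assumption.
  - apply (le_scal_inv (1 + - (c * d))); [lra |]. rewrite scal_Kinv by lra. exact H1.
Qed.

Lemma maximal_residue y : exists l, M (y +. -. (l *: a)).
Proof.
  destruct (strong_unit y) as [c Hc].
  destruct (cut_point (fun l => M (bpos (y +. -. (l *: a)))) c (- c - 1)) as [l0 Hl0].
  - intros l l' Hl Hll'. apply (ideal_below M _ _ HMi Hl); [apply pos_nonneg |].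
    apply join_mono; [| apply bl_le_refl].
    apply le_add_l, le_opp, le_scal_r; [exact Hll' | exact a_nonneg].
  - unfold bpos. rewrite join_of_le; [apply ideal0, HMi |].
    rewrite <- (bl_addN _ (c *: a)). apply bl_le_add.
    apply bl_le_trans with (babs y); [apply abs_ge | exact Hc].
  - intro H. apply HMa, (ideal_below M _ a HMi H a_nonneg).
    apply bl_le_trans with (y +. -. ((- c - 1) *: a)); [| apply pos_ge].
    rewrite scal_opp. replace (- (- c - 1)) with (c + 1) by ring.
    rewrite bl_scalDl, bl_scal1, bl_addA. rewrite <- (add0l a) at 1. apply bl_le_add.
    assert (H' : -. y <<= c *: a)
      by (apply bl_le_trans with (babs y); [apply abs_ge_opp | exact Hc]).
    apply le_sub_nonneg in H'. rewrite opp_opp, bl_addC in H'. exact H'.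
  - exists l0. apply maximal_approx. intros d Hd. destruct (Hl0 d Hd) as [HP HN].
    set (w := y +. -. (l0 *: a)).
    assert (Eplus : y +. -. ((l0 + d) *: a) = w +. -. (d *: a))
      by (unfold w; rewrite bl_scalDl, opp_add, bl_addA; reflexivity).
    assert (Eminus : y +. -. ((l0 - d) *: a) = w +. d *: a)
      by (unfold w, Rminus; rewrite bl_scalDl, opp_add, (scal_opp (- d)), Ropp_involutive, bl_addA;
          reflexivity).
    rewrite Eplus in HP. rewrite Eminus in HN.
    exists (bpos (w +. -. (d *: a)) +. bneg (w +. d *: a)). split.
    + apply ideal_add; [exact HMi | exact HP |].
      destruct (maximal_prime (w +. d *: a)) as [H | H]; [contradiction | exact H].
    + apply abs_le_shifted_parts.
Qed.

(** The multiple of [a] in [maximal_residue] is unique, since [a] is not in [M]. *)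
Lemma residue_unique y l l' : M (y +. -. (l *: a)) -> M (y +. -. (l' *: a)) -> l = l'.
Proof.
  intros H1 H2. destruct (Req_dec l l') as [h | h]; [exact h | exfalso].
  pose proof (ideal_sub M _ _ HMi H2 H1) as H3.
  replace ((y +. -. (l' *: a)) +. -. (y +. -. (l *: a))) with ((l + - l') *: a) in H3
    by (rewrite opp_add, opp_opp, add4, bl_addN, add0l, scal_opp, <- bl_scalDl; f_equal; ring).
  apply HMa. rewrite <- (scal_invK (l + - l') a) by lra. apply ideal_scal; assumption.
Qed.

(** The quotient by [M] is the real line: the residue map is a lattice homomorphism. *)
Lemma hom_of_maximal : exists f, is_hom f /\ forall x, M x -> f x = 0.
Proof.
  destruct (choice (fun y l => M (y +. -. (l *: a))) maximal_residue) as [f Hf].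
  assert (Hres : forall y l, M (y +. -. (l *: a)) -> f y = l)
    by (intros y l H; apply (residue_unique y); [apply Hf | exact H]).
  assert (Hjoin : forall x y, f y <= f x -> f (x |_| y) = f x).
  { intros x y Hxy. apply Hres. rewrite join_add.
    apply (ideal_join_le M _ (y +. -. (f y *: a))); [exact HMi | apply Hf | apply Hf |].
    apply le_add_l, le_opp, le_scal_r; [exact Hxy | exact a_nonneg]. }
  exists f. split; [repeat split |].
  - intros x y. apply Hres. rewrite bl_scalDl, opp_add, add4.
    apply ideal_add; [exact HMi | apply Hf | apply Hf].
  - intros c x. apply Hres. rewrite <- bl_scalA, <- scal_oppr, <- bl_scalDr.
    apply ideal_scal; [exact HMi | apply Hf].
  - intros x y. destruct (Rle_dec (f y) (f x)) as [h | h].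
    + rewrite Rmax_left by exact h. apply Hjoin, h.
    + rewrite Rmax_right, join_comm by lra. apply Hjoin. lra.
  - apply Hres. rewrite bl_scal1, bl_addN. apply ideal0, HMi.
  - intros x Hx. apply Hres. rewrite scal0l, opp0, bl_add0. exact Hx.
Qed.

End MaximalIdeal.

Lemma hom_separates_ideal J :
  is_ideal J -> ~ J a -> exists f, is_hom f /\ forall x, J x -> f x = 0.
Proof.
  intros HJ HJa.
  destruct (exists_max_ideal a J HJ HJa) as [M [HM HJM]].
  destruct (hom_of_maximal M HM) as [f [Hf Hk]].
  exists f; split; [exact Hf | intros x Hx; apply Hk, HJM, Hx].
Qed.

Definition pos_sum {I : Type} (y : I -> X) (l : list I) : X :=
  fold_right (fun i acc => bpos (y i) +. acc) 0v l.

Lemma pos_sum_nonneg {I : Type} (y : I -> X) l : 0v <<= pos_sum y l.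
Proof.
  induction l as [| i l IH]; [apply bl_le_refl | apply add_nonneg; [apply pos_nonneg | exact IH]].
Qed.

Lemma pos_sum_app {I : Type} (y : I -> X) l1 l2 :
  pos_sum y (l1 ++ l2) = pos_sum y l1 +. pos_sum y l2.
Proof.
  induction l1 as [| i l1 IH]; simpl; [rewrite add0l; reflexivity |].
  rewrite IH, bl_addA; reflexivity.
Qed.

Lemma hom_pos_sum {I : Type} (y : I -> X) f l :
  is_hom f -> 0 < f (pos_sum y l) -> exists i, In i l /\ 0 < f (y i).
Proof.
  intro Hf. induction l as [| i l IH]; simpl; intro H.
  - rewrite (hom0 f Hf) in H. lra.
  - rewrite (hom_add f Hf), (hom_pos f Hf) in H.
    destruct (Rlt_dec 0 (f (y i))) as [h | h]; [exists i; split; [left |]; auto |].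
    rewrite Rmax_right, Rplus_0_l in H by lra.
    destruct (IH H) as [j [Hj Hj']]. exists j; split; [right |]; auto.
Qed.

(** Otherwise the ideal generated by the [(y i)+]
    misses [a] and is annihilated by a homomorphism on which no [y i] is positive. *)
Lemma positive_cover_finite {I : Type} (y : I -> X) :
  (forall f, is_hom f -> exists i, 0 < f (y i)) ->
  exists l : list I, forall f, is_hom f -> exists i, In i l /\ 0 < f (y i).
Proof.
  intro Hcov. set (U := fun v => exists l, v = pos_sum y l).
  assert (HJ : is_ideal (dominated U)).
  { apply dominated_ideal.
    - exists nil; reflexivity.
    - intros v [l ->]. apply pos_sum_nonneg.
    - intros v w [l1 ->] [l2 ->]. exists (l1 ++ l2). symmetry; apply pos_sum_app. }
  destruct (classic (dominated U a)) as [[v [c [[l ->] [Hc Ha]]]] | HJa].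
  - exists l. intros f Hf. apply (hom_pos_sum y f l Hf).
    pose proof (hom_mono f Hf _ _ Ha) as H. pose proof Hf as [_ [_ [_ Hfa]]].
    rewrite (abs_of_nonneg a a_nonneg), (hom_scal f Hf), Hfa in H.
    destruct (Rlt_dec 0 (f (pos_sum y l))) as [h | h]; [exact h | nra].
  - exfalso. destruct (hom_separates_ideal _ HJ HJa) as [f [Hf Hk]].
    destruct (Hcov f Hf) as [i Hi].
    assert (Hyi : f (bpos (y i)) = 0).
    { apply Hk. exists (pos_sum y (i :: nil)), 1. split; [exists (i :: nil); reflexivity |].
      split; [lra |]. rewrite bl_scal1, abs_of_nonneg by apply pos_nonneg.
      simpl. rewrite bl_add0. apply bl_le_refl. }
    rewrite (hom_pos f Hf) in Hyi. pose proof (Rmax_l (f (y i)) 0). lra.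
Qed.

End Homomorphisms.

Lemma dist_triangle r s t : Rabs (r - t) <= Rabs (r - s) + Rabs (s - t).
Proof. replace (r - t) with ((r - s) + (s - t)) by ring. apply Rabs_triang. Qed.

Lemma dist_self r : Rabs (r - r) = 0.
Proof. unfold Rminus. rewrite Rplus_opp_r. apply Rabs_R0. Qed.

Section Spectrum.
Context {X : BanachLattice}.
Variable a : X.

Record point := { pt_fun :> X -> R; pt_hom : is_hom a pt_fun }.

Definition spec_open (U : point -> Prop) :=
  forall p : point, U p -> exists y, 0 < p y /\ forall q : point, 0 < q y -> U q.

Lemma spec_open_full : spec_open (fun _ => True).
Proof.
  intros p _. exists a. split; [| auto].
  rewrite <- (bl_scal1 _ a), (hom_unit a p (pt_hom p)). lra.
Qed.

Lemma spec_open_empty : spec_open (fun _ => False).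
Proof. intros p []. Qed.

(** Basic sets are closed under intersection, using finite meets. *)
Lemma spec_open_inter U V : spec_open U -> spec_open V -> spec_open (fun p => U p /\ V p).
Proof.
  intros HU HV p [Up Vp]. destruct (HU p Up) as [y1 [H1 G1]], (HV p Vp) as [y2 [H2 G2]].
  destruct (hom_finite_meet a y1 (y2 :: nil)) as [z Hz]. exists z.
  assert (Hin : forall q : point, 0 < q z -> 0 < q y1 /\ 0 < q y2).
  { intros q Hq. destruct (Hz q (pt_hom q)) as [Hle _].
    split; eapply Rlt_le_trans;
      [exact Hq | apply Hle; simpl; auto | exact Hq | apply Hle; simpl; auto]. }
  split.
  - destruct (Hz p (pt_hom p)) as [_ [x [[<- | [<- | []]] ->]]]; assumption.
  - intros q Hq. destruct (Hin q Hq). split; [apply G1 | apply G2]; assumption.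
Qed.

Lemma spec_open_union (F : (point -> Prop) -> Prop) :
  (forall U, F U -> spec_open U) -> spec_open (fun p => exists U, F U /\ U p).
Proof.
  intros HF p [U [FU Up]]. destruct (HF U FU p Up) as [y [H1 G]].
  exists y. split; [exact H1 | intros q Hq; exists U; split; [exact FU | apply G, Hq]].
Qed.

Definition spectrum : TopSpace :=
  {| ts_pt := point; ts_open := spec_open; ts_open_full := spec_open_full;
     ts_open_empty := spec_open_empty; ts_open_inter := spec_open_inter;
     ts_open_union := spec_open_union |}.

Lemma spec_open_local (W : point -> Prop) :
  (forall p, W p -> exists O, spec_open O /\ O p /\ forall q, O q -> W q) -> spec_open W.
Proof.
  intros H p Wp. destruct (H p Wp) as [O [HO [Op OW]]]. destruct (HO p Op) as [y [H1 H2]].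
  exists y. split; [exact H1 | intros q Hq; apply OW, H2, Hq].
Qed.

(** Sets [{q | |q x - c| < eps}] are open: near [p] they contain the basic set of
    [r a - |x - p(x) a|], with [r] the remaining room. *)
Lemma spec_open_ball x c eps : spec_open (fun q : point => Rabs (q x - c) < eps).
Proof.
  intros p Hp. set (r := eps - Rabs (p x - c)).
  exists (r *: a +. -. babs (x +. -. (p x *: a))).
  assert (E : forall q : point, q (r *: a +. -. babs (x +. -. (p x *: a))) = r - Rabs (q x - p x)).
  { intro q. pose proof (pt_hom q) as Hq.
    rewrite (hom_sub a q Hq), (hom_unit a q Hq), (hom_abs a q Hq), (hom_sub a q Hq),
      (hom_unit a q Hq).
    reflexivity. }
  split.
  - rewrite E, dist_self. unfold r. lra.
  - intros q Hq. rewrite E in Hq. unfold r in Hq. pose proof (dist_triangle (q x) (p x) c). lra.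
Qed.

Lemma eval_continuous x : continuous_fun spectrum (fun q : point => q x).
Proof.
  intros p eps Heps. exists (fun q : point => Rabs (q x - p x) < eps).
  split; [apply spec_open_ball | split; [| auto]].
  rewrite dist_self; exact Heps.
Qed.

Lemma points_separate (p q : point) : p <> q -> exists x, p x <> q x.
Proof.
  intros Hpq. apply NNPP; intro Hn. apply Hpq. destruct p as [f Hf], q as [g Hg]. simpl in Hn.
  assert (f = g) as ->.
  { apply functional_extensionality; intro x. apply NNPP; intro h. apply Hn; exists x; exact h. }
  f_equal. apply proof_irrelevance.
Qed.

Lemma spectrum_hausdorff : hausdorff_space spectrum.
Proof.
  intros p q Hpq. destruct (points_separate p q Hpq) as [x Hx].
  set (d := Rabs (p x - q x) / 2).
  assert (Hd : 0 < d) by (assert (0 < Rabs (p x - q x)) by (apply Rabs_pos_lt; lra); unfold d; lra).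
  exists (fun s : point => Rabs (s x - p x) < d), (fun s : point => Rabs (s x - q x) < d).
  split; [apply spec_open_ball | split; [apply spec_open_ball |]].
  rewrite !dist_self. split; [exact Hd | split; [exact Hd |]].
  intros s H1 H2. pose proof (dist_triangle (p x) (s x) (q x)).
  rewrite <- Rabs_Ropp, Ropp_minus_distr in H1. unfold d in *. lra.
Qed.

Lemma open_lt (g h : point -> R) k :
  continuous_fun spectrum g -> continuous_fun spectrum h -> spec_open (fun s => g s < h s + k).
Proof.
  intros Hg Hh. apply spec_open_local. intros s0 Hs0. set (r := (h s0 + k - g s0) / 2).
  assert (Hr : 0 < r) by (unfold r; lra).
  destruct (Hg s0 r Hr) as [Ug [HUg [Ug0 Ug1]]], (Hh s0 r Hr) as [Uh [HUh [Uh0 Uh1]]].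
  exists (fun s => Ug s /\ Uh s). split; [apply spec_open_inter; assumption | split; [auto |]].
  intros s [h1 h2]. apply Ug1, Rabs_def2 in h1. apply Uh1, Rabs_def2 in h2. unfold r in *. lra.
Qed.

(** Compactness, from the finite-subcover property of positivity sets. *)
Lemma spectrum_compact :
  0v <<= a -> (forall y, exists c, babs y <<= c *: a) -> compact_space spectrum.
Proof.
  intros a_nonneg strong_unit I U HU Hcov. simpl in *.
  assert (Hloc : forall p : point, exists iy : I * X,
             0 < p (snd iy) /\ forall q : point, 0 < q (snd iy) -> U (fst iy) q).
  { intro p. destruct (Hcov p) as [i Hi]. destruct (HU i p Hi) as [y [H1 H2]].
    exists (i, y); auto. }
  destruct (choice _ Hloc) as [ch Hch].
  destruct (positive_cover_finite a a_nonneg strong_unit (fun p => snd (ch p))) as [l Hl].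
  - intros f Hf. exists (Build_point f Hf). apply (Hch (Build_point f Hf)).
  - exists (map (fun p => fst (ch p)) l). intro q. destruct (Hl q (pt_hom q)) as [p [Hp Hq]].
    exists (fst (ch p)). split; [apply (in_map (fun p => fst (ch p))), Hp | apply Hch, Hq].
Qed.

End Spectrum.

Lemma inv_succ_small eps : 0 < eps -> exists N : nat, forall n, (N <= n)%nat -> / (INR n + 1) < eps.
Proof.
  intro He. destruct (INR_archimed eps 1 He) as [N HN]. exists N. intros n Hn.
  apply le_INR in Hn. pose proof (pos_INR N).
  apply Rmult_lt_reg_r with (INR n + 1); [lra |]. rewrite Rinv_l by lra. nra.
Qed.

Section Representation.
Context {X : BanachLattice}.
Variable a : X.
Hypothesis HAM : is_AM_space X.
Hypothesis Hoe : order_extreme_point X (unit_ball X) a.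

Let a_nonneg : 0v <<= a := extreme_nonneg a Hoe.
Let strong_unit : forall y, exists c, babs y <<= c *: a :=
  fun y => ex_intro _ (bl_norm y) (abs_le_norm_extreme a HAM Hoe y).
Let compact : compact_space (spectrum a) := spectrum_compact a a_nonneg strong_unit.

Lemma hom_bound f x : is_hom a f -> Rabs (f x) <= bl_norm x.
Proof.
  intro Hf. rewrite <- (hom_abs a f Hf), <- (hom_unit a f Hf (bl_norm x)).
  apply (hom_mono a f Hf), abs_le_norm_extreme; assumption.
Qed.

(** The norm is attained: a homomorphism annihilating [||x|| a - |x|] exists, because
    the ideal generated by this positive element cannot contain [a]. *)
Lemma norm_attained x : 0 < bl_norm x -> exists f, is_hom a f /\ Rabs (f x) = bl_norm x.
Proof.
  intro Hn. set (n := bl_norm x) in *. set (D := n *: a +. -. babs x).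
  assert (HD : 0v <<= D) by (apply le_sub_nonneg, abs_le_norm_extreme; assumption).
  set (U := fun v => exists c, 0 <= c /\ v = c *: D).
  assert (HJ : is_ideal (dominated U)).
  { apply dominated_ideal.
    - exists 0. rewrite scal0l. split; [lra | reflexivity].
    - intros v [c [Hc ->]]. apply scal_nonneg; assumption.
    - intros v w [c [Hc ->]] [d [Hd ->]].
      exists (c + d). split; [lra | symmetry; apply bl_scalDl]. }
  assert (HJa : ~ dominated U a).
  { intros [v [c [[k [Hk ->]] [Hc Ha]]]].
    set (e := c * k + 1). assert (He : 0 < e) by (unfold e; nra).
    (* [a <= e (n a - |x|)] gives [|x| <= (n - 1/e) a], contradicting the norm of [x] *)
    assert (Ha' : a <<= e *: D).
    { rewrite <- (abs_of_nonneg a a_nonneg). apply bl_le_trans with ((c * k) *: D).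
      - rewrite <- bl_scalA. exact Ha.
      - apply le_scal_r; [unfold e; lra | exact HD]. }
    unfold D in Ha'. rewrite bl_scalDr, bl_scalA, scal_oppr in Ha'.
    apply le_add_move' in Ha'. rewrite bl_addC in Ha'. apply le_add_move in Ha'.
    rewrite opp_scal, <- bl_scalDl in Ha'.
    apply (bl_le_scal _ (/ e)) in Ha'; [| left; apply Rinv_0_lt_compat, He].
    rewrite scal_invK, bl_scalA in Ha' by lra.
    pose proof (norm_le_of_abs_le a Hoe x _ Ha') as Hb. fold n in Hb.
    replace (/ e * (e * n + -1)) with (n - / e) in Hb by (field; lra).
    pose proof (Rinv_0_lt_compat e He). unfold Rmax in Hb. destruct (Rle_dec (n - / e) 0); lra. }
  destruct (hom_separates_ideal a a_nonneg strong_unit _ HJ HJa) as [f [Hf Hk]].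
  exists f. split; [exact Hf |].
  assert (HfD : f D = 0).
  { apply Hk. exists D, 1. split; [exists 1; split; [lra | symmetry; apply bl_scal1] |].
    split; [lra | rewrite bl_scal1, abs_of_nonneg by exact HD; apply bl_le_refl]. }
  unfold D in HfD. rewrite (hom_sub a f Hf), (hom_unit a f Hf), (hom_abs a f Hf) in HfD. lra.
Qed.

Lemma norm_le_sup v c :
  0 <= c -> (forall f, is_hom a f -> Rabs (f v) <= c) -> bl_norm v <= c.
Proof.
  intros Hc H. destruct (Rle_dec (bl_norm v) 0) as [h | h]; [lra |].
  destruct (norm_attained v ltac:(lra)) as [f [Hf E]]. rewrite <- E. apply H, Hf.
Qed.

Section Density.
Variable g : point a -> R.
Hypothesis Hg : continuous_fun (spectrum a) g.

(** Affine combinations of [a] and a separating vector interpolate [g] at two points. *)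
Lemma two_point_interpolation (p q : point a) : exists x, p x = g p /\ q x = g q.
Proof.
  destruct (classic (p = q)) as [-> | Hpq].
  - exists (g q *: a). rewrite (hom_unit a q (pt_hom a q)). auto.
  - destruct (points_separate a p q Hpq) as [y Hy].
    set (t := (g p - g q) / (p y - q y)). set (s := g p - t * p y).
    exists (s *: a +. t *: y).
    rewrite (hom_add a p (pt_hom a p)), (hom_add a q (pt_hom a q)), (hom_unit a p (pt_hom a p)),
      (hom_unit a q (pt_hom a q)), (hom_scal a p (pt_hom a p)), (hom_scal a q (pt_hom a q)).
    unfold s, t. split; [ring | field]. intro h; apply Hy; lra.
Qed.

(** Finite meets of interpolants: matching [g] at [p], below [g + eps] everywhere. *)
Lemma upper_approx eps (p : point a) :
  0 < eps -> exists y, p y = g p /\ forall s : point a, s y < g s + eps.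
Proof.
  intro Heps. destruct (choice _ (two_point_interpolation p)) as [xq Hxq].
  destruct (compact (point a) (fun q (s : point a) => s (xq q) < g s + eps)) as [l Hl].
  - intro q. apply (open_lt a (fun s : point a => s (xq q)) g eps);
      [apply eval_continuous | exact Hg].
  - intro q. exists q. simpl. rewrite (proj2 (Hxq q)). lra.
  - destruct (hom_finite_meet a (xq p) (map xq l)) as [z Hz]. exists z. split.
    + destruct (Hz p (pt_hom a p)) as [_ [x [Hx ->]]].
      destruct Hx as [<- | Hx]; [apply Hxq |].
      apply in_map_iff in Hx. destruct Hx as [q [<- _]]. apply Hxq.
    + intro s. destruct (Hl s) as [q [Hq Hs]]. destruct (Hz s (pt_hom a s)) as [Hle _].
      eapply Rle_lt_trans; [apply Hle | exact Hs]. right. apply in_map, Hq.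
Qed.

(** Finite joins of the upper approximations are uniformly [eps]-close to [g]. *)
Lemma uniform_approx eps : 0 < eps -> exists z, forall s : point a, Rabs (s z - g s) < eps.
Proof.
  intro Heps. destruct (choice _ (fun p => upper_approx eps p Heps)) as [yp Hyp].
  destruct (compact (point a) (fun p (s : point a) => g s < s (yp p) + eps)) as [l Hl].
  - intro p. apply (open_lt a g (fun s : point a => s (yp p)) eps);
      [exact Hg | apply eval_continuous].
  - intro p. exists p. simpl. rewrite (proj1 (Hyp p)). lra.
  - destruct l as [| p0 l].
    + exists 0v. intro s. destruct (Hl s) as [p [[] _]].
    + destruct (hom_finite_join a (yp p0) (map yp (p0 :: l))) as [z Hz]. exists z. intro s.
      destruct (Hz s (pt_hom a s)) as [Hle [x [Hx Ex]]]. apply Rabs_def1.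
      * assert (Hlt : s x < g s + eps); [| lra].
        destruct Hx as [<- | Hx]; [apply Hyp |].
        apply in_map_iff in Hx. destruct Hx as [q [<- _]]. apply Hyp.
      * destruct (Hl s) as [p [Hp Hs]]. simpl in Hs.
        assert (s (yp p) <= s z); [apply Hle; right; apply in_map, Hp | lra].
Qed.

(** Completeness turns uniform approximation into exact representation. *)
Lemma eval_surjective : exists x, forall s : point a, s x = g s.
Proof.
  assert (Hpos : forall n : nat, 0 < / (INR n + 1))
    by (intro n; apply Rinv_0_lt_compat; pose proof (pos_INR n); lra).
  destruct (choice (fun n z => forall s : point a, Rabs (s z - g s) < / (INR n + 1))
                   (fun n => uniform_approx _ (Hpos n))) as [zn Hz].
  assert (Hc : forall m n, bl_norm (zn m +. -. zn n) <= / (INR m + 1) + / (INR n + 1)).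
  { intros m n. apply norm_le_sup; [pose proof (Hpos m); pose proof (Hpos n); lra |].
    intros f Hf. rewrite (hom_sub a f Hf).
    pose proof (Hz m (Build_point a f Hf)) as h1. pose proof (Hz n (Build_point a f Hf)) as h2.
    simpl in h1, h2. rewrite <- Rabs_Ropp, Ropp_minus_distr in h2.
    pose proof (dist_triangle (f (zn m)) (g (Build_point a f Hf)) (f (zn n))). lra. }
  destruct (bl_complete X zn) as [l Hl].
  - intros eps He. destruct (inv_succ_small (eps / 2) ltac:(lra)) as [N HN]. exists N.
    intros m n Hm Hn. pose proof (Hc m n). pose proof (HN m Hm). pose proof (HN n Hn). lra.
  - exists l. intro s. apply NNPP; intro Hne.
    set (d := Rabs (s l - g s)).
    assert (Hd : 0 < d) by (unfold d; apply Rabs_pos_lt; lra).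
    destruct (Hl (d / 4) ltac:(lra)) as [N1 HN1].
    destruct (inv_succ_small (d / 4) ltac:(lra)) as [N2 HN2].
    set (n := Nat.max N1 N2).
    pose proof (HN1 n (Nat.le_max_l _ _)) as h1. pose proof (HN2 n (Nat.le_max_r _ _)) as h2.
    pose proof (Hz n s) as h3. pose proof (hom_bound s (l +. -. zn n) (pt_hom a s)) as h4.
    rewrite (hom_sub a s (pt_hom a s)), norm_sub_sym in h4.
    pose proof (dist_triangle (s l) (s (zn n)) (g s)) as h5. fold d in h5. lra.
Qed.

End Density.
End Representation.

Theorem mainTheorem15 (X : BanachLattice) :
  is_AM_space X ->
  (exists a : X, order_extreme_point X (unit_ball X) a) ->
  exists (K : TopSpace) (T : X -> K -> R),
    compact_space K /\ hausdorff_space K /\ lattice_isometry_onto_CK X K T.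
Proof.
  intros HAM [a Hoe].
  exists (spectrum a), (fun x (p : point a) => p x).
  split; [apply spectrum_compact; [apply (extreme_nonneg a Hoe) |
          intro y; exists (bl_norm y); apply abs_le_norm_extreme; assumption] |].
  split; [apply spectrum_hausdorff |].
  repeat split.
  - intro x; apply eval_continuous.
  - (* injectivity: [x - y] vanishes on the spectrum, so has norm [0] *)
    intros x y Hxy. apply (add_cancel_l _ _ (-. y)). rewrite bl_addC, addNl. apply (bl_norm_eq0 X).
    apply Rle_antisym; [| apply norm_nonneg]. apply (norm_le_sup a HAM Hoe); [lra |].
    intros f Hf. rewrite (hom_sub a f Hf). pose proof (Hxy (Build_point a f Hf)) as E. simpl in E.
    rewrite E, dist_self. lra.
  - intros f Hf. apply (eval_surjective a HAM Hoe f Hf).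
  - intros x y p. apply (hom_add a p (pt_hom a p)).
  - intros c x p. apply (hom_scal a p (pt_hom a p)).
  - intros x y p. apply (hom_join a p (pt_hom a p)).
  - apply norm_nonneg.
  - intro p. apply (hom_bound a HAM Hoe), pt_hom.
  - intros c Hc H. apply (norm_le_sup a HAM Hoe); [exact Hc |].
    intros f Hf. apply (H (Build_point a f Hf)).
Qed.
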